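(* For every digraph $G$, the cubical set $N_\infty G$ is a Kan complex.
   Context: A digraph $G$ is a vertex set with a set of arrows $E(G)\subseteq V(G)^2$ containing the diagonal; digraph maps preserve arrows. Box product $G\otimes H$: vertices $V(G)\times V(H)$, arrow $(g,h)\to(g',h')$ iff ($g\to g'$, $h=h'$) or ($g=g'$, $h\to h'$). $I_n$: vertices $\{0,\dots,n\}$, non-degenerate arrows $2i\to 2i+1$ and $2j+2\to 2j+1$; $I_n^{\mathrm{op}}$ the reversed digraph; write $I_n^{+1}=I_n$, $I_n^{-1}=I_n^{\mathrm{op}}$. For an interval $J$ with vertices $\{0,\dots,k\}$, $N_JG$ is the cubical set with connections with $n$-cubes $\mathrm{Hom}(J^{\otimes n},G)$, faces inserting coordinate $0$ or $k$, degeneracies deleting a coordinate, connections taking max/min of adjacent coordinates; $N_m=N_{I_m}$, $N_m^{\mathrm{op}}=N_{I_m^{\mathrm{op}}}$. Maps $r:I^\varepsilon_{n+1}\to I^\varepsilon_n$, $r(x)=\min(x,n)$, and $l:I^{-\varepsilon}_{n+1}\to I^\varepsilon_n$, $l(x)=\max(x-1,0)$, are digraph maps. $N_\infty G$ is the colimit of $N_1G\xrightarrow{r^*}N_2G\xrightarrow{l^*}N_3^{\mathrm{op}}G\xrightarrow{r^*}N_4^{\mathrm{op}}G\xrightarrow{l^*}N_5G\xrightarrow{r^*}\cdots$. A Kan complex is a cubical set with fillers for all open box inclusions $\sqcap^n_{i,\varepsilon}\hookrightarrow\Box^n$. *)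

From mathcomp Require Import all_boot.
Set Implicit Arguments.
Unset Strict Implicit.
Unset Printing Implicit Defensive.

Record digraph := Digraph {
  vert :> Type;
  arr : vert -> vert -> Prop;
  arr_refl : forall x, arr x x
}.

Definition Iarr (a b : nat) : Prop :=
  a = b \/ (~~ odd a /\ b = a.+1) \/ (~~ odd a /\ 0 < a /\ b = a.-1).

(* sign true = I_m (= I_m^{+1}), sign false = I_m^op (= I_m^{-1}). *)
Definition Iarr_s (s : bool) (a b : nat) : Prop :=
  if s then Iarr a b else Iarr b a.

(* ---- The sequence N_1 -> N_2 -> N_3^op -> N_4^op -> N_5 -> ... ----
   Stage p (p = 0,1,2,...) is the nerve N_J with J = I_{p+1}^{sign p},
   sign p = + iff ((p+1)-1)/2 = p/2 is even. *)
Definition stage_sign (p : nat) : bool := ~~ odd p./2.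

(* The digraph map J_{p+1} -> J_p inducing the transition N_{J_p} -> N_{J_{p+1}}:
   for m = p+1 odd it is r(x) = min(x, m), for m even it is l(x) = max(x-1,0). *)
Definition tr (p : nat) (x : nat) : nat :=
  if ~~ odd p then minn x p.+1 else x.-1.

Fixpoint TT (p d : nat) : nat -> nat :=
  match d with
  | 0 => id
  | d'.+1 => fun x => TT p d' (tr (p + d') x)
  end.

Definition is_vertex (k n : nat) (v : seq nat) : bool :=
  (size v == n) && all (fun a => a <= k) v.

Definition box_arr (s : bool) (n : nat) (v w : seq nat) : Prop :=
  v = w \/ exists j, j < n /\ (forall i, i != j -> nth 0 v i = nth 0 w i)
                     /\ Iarr_s s (nth 0 v j) (nth 0 w j).

(* x is an n-cube of N_{I_{p+1}^{sign p}} G, i.e. a digraph map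
   (I_{p+1}^{sign p})^{(x) n} -> G (only its values on vertices matter). *)
Definition is_cube (G : digraph) (p n : nat) (x : seq nat -> G) : Prop :=
  forall v w, is_vertex p.+1 n v -> is_vertex p.+1 n w ->
    box_arr (stage_sign p) n v w -> arr (x v) (x w).

(* A representative of an element of N_oo G: a stage and a cube at that stage. *)
Record rep (G : digraph) := Rep { rstage : nat; rmap : seq nat -> G }.

Definition valid (G : digraph) (n : nat) (c : rep G) : Prop :=
  is_cube (rstage c) n (rmap c).

(* Two representatives of n-cubes define the same n-cube of the sequential
   colimit iff they become equal at some common later stage. *)
Definition ceq (G : digraph) (n : nat) (c c' : rep G) : Prop :=
  exists s, rstage c <= s /\ rstage c' <= s /\
    forall v, is_vertex s.+1 n v ->
      rmap c (map (TT (rstage c) (s - rstage c)) v)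
      = rmap c' (map (TT (rstage c') (s - rstage c')) v).

Definition ins (i e : nat) (v : seq nat) : seq nat := take i v ++ e :: drop i v.

Definition face (G : digraph) (i : nat) (eps : bool) (c : rep G) : rep G :=
  Rep (rstage c) (fun v => rmap c (ins i (if eps then (rstage c).+1 else 0) v)).

(* Kan condition for N_oo G: every open box (i,eps) in dimension n+1, i.e. a
   family of n-cubes b j eta for (j,eta) <> (i,eps) that agree on common
   (n-1)-faces, has a filler. *)
Definition Ninfty_Kan (G : digraph) : Prop :=
  forall (n i : nat) (eps : bool) (b : nat -> bool -> rep G),
    i < n.+1 ->
    (forall j eta, j < n.+1 -> (j, eta) <> (i, eps) -> valid n (b j eta)) ->
    (forall j j' eta eta', j < j' -> j' < n.+1 ->
       (j, eta) <> (i, eps) -> (j', eta') <> (i, eps) ->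
       ceq n.-1 (face j eta (b j' eta')) (face j'.-1 eta' (b j eta))) ->
    exists c : rep G, valid n.+1 c /\
      forall j eta, j < n.+1 -> (j, eta) <> (i, eps) ->
        ceq n (face j eta c) (b j eta).

(* An open box in N_oo G consists of finitely many cubes whose faces agree in
   the colimit, so the cubes and all the face identities between them live at
   a single stage p, which may be taken odd (then the 2m transitions from stage
   p + 2m down to p contain exactly m maps of type l).  At stage p the cubes glue to a map on the
   union of the faces of the open box in (I_{p+1})^(n+1).  A filler at stage
   q = p + 2m (m > p) is this glued map precomposed with a retraction of the
   finer cube onto the open box: every coordinate is sent through the
   transition map x |-> min (x - m, p + 1), except the coordinate i of the
   missing face, which is moreover pushed towards the opposite face by
   m - depth, where depth is the distance to the other faces.  All these maps
   are built from min, max and truncated subtraction, which respect the zigzag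
   arrows of the intervals up to a computable parity shift, so the retraction
   is a digraph map; on the faces of the box it is the transition map, so the
   filler has the prescribed faces. *)

From mathcomp Require Import all_boot zify.
Set Implicit Arguments.
Unset Strict Implicit.
Unset Printing Implicit Defensive.

(** * Zigzag arrows *)

Definition zigzag (c : bool) (x y : nat) : Prop :=
  x = y \/ ((y = x.+1 \/ x = y.+1) /\ odd x = c).

Lemma Iarr_sE s x y : Iarr_s s x y <-> zigzag (~~ s) x y.
Proof. by rewrite /Iarr_s /Iarr /zigzag; case: s => /=; split; lia. Qed.

Lemma zigzag_minn c x y x' y' :
  zigzag c x y -> zigzag c x' y' -> zigzag c (minn x x') (minn y y').
Proof. rewrite /zigzag; lia. Qed.

Lemma zigzag_maxn c x y x' y' :
  zigzag c x y -> zigzag c x' y' -> zigzag c (maxn x x') (maxn y y').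
Proof. rewrite /zigzag; lia. Qed.

Lemma zigzag_subn c k x y : zigzag c x y -> zigzag (c (+) odd k) (x - k) (y - k).
Proof.
case=> [->|[xy <-]]; [by left | rewrite /zigzag].
by case: (leqP k x) => hk; [rewrite oddB // | left]; lia.
Qed.

Lemma zigzag_rsubn c k x y : zigzag c x y -> zigzag (c (+) odd k) (k - x) (k - y).
Proof.
case=> [->|[xy <-]]; [by left | rewrite /zigzag].
by case: (leqP x k) => hk; [rewrite oddB // addbC | left]; lia.
Qed.

(** * Transition maps *)

Definition lshift (p d : nat) : nat := count odd (iota p d).

Lemma lshiftS p d : lshift p d.+1 = lshift p d + odd (p + d).
Proof. by rewrite /lshift -addn1 iotaD count_cat /= addn0. Qed.

Lemma lshift_le p d : lshift p d <= d.
Proof. by rewrite -[leqRHS](size_iota p) count_size. Qed.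

Lemma lshift_double p m : odd p -> lshift p (m + m) = m.
Proof. by move=> odd_p; elim: m => // m IH; rewrite addSn addnS !lshiftS IH; lia. Qed.

Lemma odd_half_lshift p d : odd ((p + d)./2 + lshift p d) = odd p./2.
Proof.
elim: d => [|d IH]; first by rewrite addn0 /lshift /= addn0.
by move: IH; rewrite lshiftS addnS -!divn2; lia.
Qed.

Lemma TTE p d x : x <= (p + d).+1 -> TT p d x = minn (x - lshift p d) p.+1.
Proof.
elim: d x => [|d IH] x hx /=; first by rewrite /lshift /=; lia.
have := lshift_le p d; rewrite lshiftS /tr; case: ifP => h hd; rewrite IH; lia.
Qed.

Lemma TT0 p d : TT p d 0 = 0.
Proof. by rewrite TTE. Qed.

Lemma TT_top p d : TT p d (p + d).+1 = p.+1.
Proof. by have := lshift_le p d; rewrite TTE //; lia. Qed.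

Lemma TT_le p d x : x <= (p + d).+1 -> TT p d x <= p.+1.
Proof. by move=> h; rewrite TTE // geq_minr. Qed.

Lemma TT_comp p d1 d2 x : TT p (d1 + d2) x = TT p d1 (TT (p + d1) d2 x).
Proof. by elim: d2 x => [|d2 IH] x /=; rewrite ?addn0 // addnS /= IH addnA. Qed.

Lemma TT_trans r s p x : r <= s -> s <= p ->
  TT r (p - r) x = TT r (s - r) (TT s (p - s) x).
Proof.
move=> hrs hsp; have -> : p - r = (s - r) + (p - s) by lia.
by rewrite TT_comp subnKC.
Qed.

Lemma stage_sign_TT p d :
  ~~ stage_sign p = ~~ stage_sign (p + d) (+) odd (lshift p d).
Proof. by rewrite /stage_sign !negbK -oddD odd_half_lshift. Qed.

Lemma zigzag_TT p d x y : x <= (p + d).+1 -> y <= (p + d).+1 ->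
  zigzag (~~ stage_sign (p + d)) x y -> zigzag (~~ stage_sign p) (TT p d x) (TT p d y).
Proof.
move=> hx hy xy; rewrite !TTE // (stage_sign_TT p d).
by apply: zigzag_minn; [exact: zigzag_subn | left].
Qed.

Definition endpoint (p : nat) (eta : bool) : nat := if eta then p.+1 else 0.

Lemma endpoint_inj p : injective (endpoint p).
Proof. by case; case. Qed.

Lemma TT_endpoint r p eta : r <= p -> TT r (p - r) (endpoint p eta) = endpoint r eta.
Proof. by move=> hrp; case: eta; rewrite /endpoint ?TT0 // -{2}(subnKC hrp) TT_top. Qed.

(** * Inserting and deleting coordinates *)

Lemma is_vertexP k n v : reflect (size v = n /\ forall j, nth 0 v j <= k) (is_vertex k n v).
Proof.
apply: (iffP andP) => [[/eqP sz /allP le_vk]|[sz le_vk]].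
  split=> // j; case: (ltnP j (size v)) => hj; first exact/le_vk/mem_nth.
  by rewrite nth_default.
by split; [apply/eqP | apply/(all_nthP 0) => j _].
Qed.

Definition del (k : nat) (w : seq nat) : seq nat := take k w ++ drop k.+1 w.

Lemma size_ins i e v : size (ins i e v) = (size v).+1.
Proof. by rewrite /ins size_cat /= addnS -size_cat cat_take_drop. Qed.

Lemma nth_ins i e v k : i <= size v ->
  nth 0 (ins i e v) k = if k < i then nth 0 v k else if k == i then e else nth 0 v k.-1.
Proof.
move=> hi; rewrite /ins nth_cat size_takel //.
case: ltnP => hk; first by rewrite nth_take.
case: eqVneq => [->|hne]; first by rewrite subnn.
by rewrite (_ : k - i = (k.-1 - i).+1) /= ?nth_drop ?subnKC //; lia.
Qed.

Lemma size_del k w : k < size w -> size (del k w) = (size w).-1.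
Proof. by move=> h; rewrite /del size_cat size_take size_drop h; lia. Qed.

Lemma nth_del k w j : k < size w ->
  nth 0 (del k w) j = if j < k then nth 0 w j else nth 0 w j.+1.
Proof.
move=> h; rewrite /del nth_cat size_take h.
by case: ltnP => hj; rewrite ?nth_take ?nth_drop ?addSn ?subnKC.
Qed.

Lemma nth_map0 (f : nat -> nat) v l : f 0 = 0 -> nth 0 (map f v) l = f (nth 0 v l).
Proof.
move=> f0; case: (ltnP l (size v)) => hl; first exact: nth_map.
by rewrite !nth_default ?size_map.
Qed.

Lemma map_ins f i e v : map f (ins i e v) = ins i (f e) (map f v).
Proof. by rewrite /ins map_cat map_take /= map_drop. Qed.

Lemma del_ins k e u : k <= size u -> del k (ins k e u) = u.
Proof.
move=> h; rewrite /del /ins take_size_cat ?size_takel // drop_cat size_takel //.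
by rewrite ltnNge leqnSn /= subSnn drop1 cat_take_drop.
Qed.

Lemma ins_del k w : k < size w -> ins k (nth 0 w k) (del k w) = w.
Proof.
move=> h; rewrite /ins /del take_size_cat ?size_takel ?drop_size_cat ?size_takel //; try lia.
by rewrite -drop_nth // cat_take_drop.
Qed.

Lemma del_delC k k' w : k < k' -> k' < size w ->
  del k (del k' w) = del k'.-1 (del k w).
Proof.
move=> hk hk'; apply: (@eq_from_nth _ 0) => [|j _].
  by rewrite !size_del ?size_del //; lia.
rewrite !nth_del ?size_del //; [|lia..].
have -> : (j < k'.-1) = (j.+1 < k') by lia.
case: (ltnP j k) => hjk; last by rewrite (ltnNge j.+1 k) (leqW hjk).
by rewrite (ltn_trans hjk hk) (leq_ltn_trans hjk hk).
Qed.

Lemma is_vertex_del k n p w : k <= n -> is_vertex p n.+1 w -> is_vertex p n (del k w).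
Proof.
move=> hk /is_vertexP [sz le_w]; apply/is_vertexP.
by split=> [|j]; rewrite ?size_del ?nth_del ?sz //; case: ifP.
Qed.

Lemma box_arr_del s n k v w : size v = n.+1 -> size w = n.+1 -> k <= n ->
  nth 0 v k = nth 0 w k -> box_arr s n.+1 v w -> box_arr s n (del k v) (del k w).
Proof.
move=> hv hw hk vwk [->|[j [hj [vw arr_j]]]]; first by left.
case: (eqVneq j k) => [ejk|njk].
  left; congr del; apply: (@eq_from_nth _ 0) => [|l _]; first by rewrite hv hw.
  by case: (eqVneq l k) => [->|hlk] //; apply: vw; rewrite ejk.
right; exists (if j < k then j else j.-1); split; first by case: ifP; lia.
split=> [l hl|]; rewrite !nth_del ?hv ?hw //.
  by case: ifP => hlk; apply: vw; move: hl; case: ifP; lia.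
case: (ltnP j k) => hjk; first by rewrite hjk.
by rewrite (ltnNge j.-1 k) (_ : k <= j.-1) ?prednK //; lia.
Qed.

(** * Transport to later stages *)

Lemma is_vertex_TT r p n v : r <= p ->
  is_vertex p.+1 n v -> is_vertex r.+1 n (map (TT r (p - r)) v).
Proof.
move=> hrp /is_vertexP [sz le_v]; apply/is_vertexP.
by split=> [|j]; rewrite ?size_map ?nth_map0 ?TT0 ?TT_le ?subnKC.
Qed.

Lemma box_arr_TT r p n v w : r <= p -> is_vertex p.+1 n v -> is_vertex p.+1 n w ->
  box_arr (stage_sign p) n v w ->
  box_arr (stage_sign r) n (map (TT r (p - r)) v) (map (TT r (p - r)) w).
Proof.
move=> hrp /is_vertexP [_ le_v] /is_vertexP [_ le_w] [->|[j [hj [vw arr_j]]]].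
  by left.
right; exists j; split=> //; split=> [l hl|]; rewrite !nth_map0 ?TT0 //; first by rewrite vw.
have e : r + (p - r) = p by rewrite subnKC.
by apply/Iarr_sE; apply: zigzag_TT; rewrite e // -Iarr_sE.
Qed.

Definition transport (G : digraph) (c : rep G) (p : nat) (v : seq nat) : G :=
  rmap c (map (TT (rstage c) (p - rstage c)) v).

Lemma transport_cube (G : digraph) n (c : rep G) p :
  rstage c <= p -> valid n c -> is_cube p n (transport c p).
Proof.
by move=> hcp c_cube v w hv hw vw; apply: c_cube; [apply: is_vertex_TT..|apply: box_arr_TT].
Qed.

Lemma transport_trans (G : digraph) (c : rep G) p q v : rstage c <= p -> p <= q ->
  transport c q v = transport c p (map (TT p (q - p)) v).
Proof.
by move=> hcp hpq; rewrite /transport -map_comp; congr rmap; apply: eq_map => x; apply: TT_trans.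
Qed.

Lemma transport_face (G : digraph) (c : rep G) j eta p u : rstage c <= p ->
  transport (face j eta c) p u = transport c p (ins j (endpoint p eta) u).
Proof. by move=> hcp; rewrite /transport map_ins TT_endpoint. Qed.

(** * Properties holding from some stage on *)

Definition eventually (P : nat -> Prop) : Prop := exists p0, forall p, p0 <= p -> P p.

Lemma eventually_ge r : eventually (fun p => r <= p).
Proof. by exists r. Qed.

Lemma eventually_and (P Q : nat -> Prop) :
  eventually P -> eventually Q -> eventually (fun p => P p /\ Q p).
Proof.
move=> [p1 P_p1] [p2 Q_p2]; exists (maxn p1 p2) => p.
by rewrite geq_max => /andP [h1 h2]; split; [apply: P_p1 | apply: Q_p2].
Qed.

Lemma eventually_imp (b : bool) (P : nat -> Prop) :
  (b -> eventually P) -> eventually (fun p => b -> P p).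
Proof.
by case: b => [/(_ isT) [p0 P_p0]|_]; [exists p0 => p hp _; apply: P_p0 | exists 0].
Qed.

Lemma eventually_forall_ltn N (Q : nat -> nat -> Prop) :
  (forall j, j < N -> eventually (Q j)) -> eventually (fun p => forall j, j < N -> Q j p).
Proof.
elim: N => [|N IH] Q_ev; first by exists 0.
have [p0 Q_p0] := eventually_and (IH (fun j hj => Q_ev j (ltnW hj))) (Q_ev N (ltnSn N)).
exists p0 => p hp j; rewrite ltnS leq_eqVlt => /orP [/eqP ->|hj]; first by case: (Q_p0 p hp).
by case: (Q_p0 p hp) => Q_lt _; apply: Q_lt.
Qed.

Lemma eventually_forall_bool (Q : bool -> nat -> Prop) :
  (forall e, eventually (Q e)) -> eventually (fun p => forall e, Q e p).
Proof.
move=> Q_ev; have [p0 Q_p0] := eventually_and (Q_ev true) (Q_ev false).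
by exists p0 => p hp [|]; case: (Q_p0 p hp).
Qed.

Lemma eventually_odd (P : nat -> Prop) : eventually P -> exists2 p, odd p & P p.
Proof.
case=> p0 P_p0; exists p0.*2.+1; first by rewrite /= odd_double.
by apply: P_p0; rewrite -addnn; lia.
Qed.

Lemma ceq_transport (G : digraph) n (c c' : rep G) : ceq n c c' ->
  eventually (fun p => forall u, is_vertex p.+1 n u -> transport c p u = transport c' p u).
Proof.
move=> [s [hc [hc' eq_s]]]; exists s => p hsp u hu.
by rewrite !(transport_trans _ _ hsp) //; apply: eq_s; apply: is_vertex_TT.
Qed.

Lemma eventually_face_compat (G : digraph) n (c c' : rep G) j j' eta eta' :
  ceq n (face j eta c) (face j' eta' c') ->
  eventually (fun p => forall u, is_vertex p.+1 n u ->
    transport c p (ins j (endpoint p eta) u) = transport c' p (ins j' (endpoint p eta') u)).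
Proof.
move=> /ceq_transport eq_faces.
have [p0 H] := eventually_and eq_faces
  (eventually_and (eventually_ge (rstage c)) (eventually_ge (rstage c'))).
by exists p0 => p hp u hu; have [eq_p [hc hc']] := H p hp; rewrite -!transport_face // eq_p.
Qed.

(** * Filling an open box *)

Section OpenBox.

Variables (n i : nat) (eps : bool).
Hypothesis lt_in : i < n.+1.

Definition box_face (p : nat) (w : seq nat) (k : nat) (eta : bool) : bool :=
  [&& k < n.+1, (k, eta) != (i, eps) & nth 0 w k == endpoint p eta].

Section Retraction.

Variables p m : nat.
Hypotheses (odd_p : odd p) (lt_pm : p < m).

Definition clamp (x : nat) : nat := minn (x - m) p.+1.

Definition depth (x : nat) : nat := minn x ((p + (m + m)).+1 - x).

Definition height (v : seq nat) : nat := \max_(k < n.+1 | k != i :> nat) (m - depth (nth 0 v k)).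

Definition slide (v : seq nat) : nat :=
  if eps then minn (clamp (nth 0 v i)) (height v)
  else maxn (clamp (nth 0 v i)) (p.+1 - height v).

Definition retract (v : seq nat) : seq nat := set_nth 0 (map clamp v) i (slide v).

Lemma clamp_le x : clamp x <= p.+1.
Proof. exact: geq_minr. Qed.

Lemma clamp_endpoint eta : clamp (endpoint (p + (m + m)) eta) = endpoint p eta.
Proof. by rewrite /clamp /endpoint; case: eta; lia. Qed.

Lemma TT_clamp x : x <= (p + (m + m)).+1 -> TT p (m + m) x = clamp x.
Proof. by move=> hx; rewrite TTE // lshift_double. Qed.

Lemma stage_sign_clamp : ~~ stage_sign (p + (m + m)) (+) odd m = ~~ stage_sign p.
Proof. by rewrite (stage_sign_TT p (m + m)) lshift_double. Qed.

Lemma zigzag_clamp c x y : zigzag c x y -> zigzag (c (+) odd m) (clamp x) (clamp y).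
Proof. by move=> xy; apply: zigzag_minn; [exact: zigzag_subn | left]. Qed.

Lemma zigzag_depth c x y : zigzag c x y -> zigzag c (depth x) (depth y).
Proof.
move=> xy; apply: zigzag_minn => //.
have := zigzag_rsubn (p + (m + m)).+1 xy.
by rewrite /= oddD addnn odd_double addbF odd_p addbF.
Qed.

Lemma zigzag_height c v w : (forall l, zigzag c (nth 0 v l) (nth 0 w l)) ->
  zigzag (c (+) odd m) (height v) (height w).
Proof.
move=> vw; apply: (big_ind2 (zigzag (c (+) odd m))); [by left | exact: zigzag_maxn |].
by move=> k _; apply/zigzag_rsubn/zigzag_depth.
Qed.

Lemma zigzag_slide c v w : (forall l, zigzag c (nth 0 v l) (nth 0 w l)) ->
  zigzag (c (+) odd m) (slide v) (slide w).
Proof.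
move=> vw; have hvw := zigzag_height vw; have hi := zigzag_clamp (vw i).
rewrite /slide; case: eps; first exact: zigzag_minn.
by apply: zigzag_maxn => //; have := zigzag_rsubn p.+1 hvw; rewrite /= odd_p addbF.
Qed.

Lemma height_le v : height v <= m.
Proof. by apply/bigmax_leqP => k _; apply: leq_subr. Qed.

Lemma height_eq_m v k : k < n.+1 -> k != i -> depth (nth 0 v k) = 0 -> height v = m.
Proof.
move=> hk hki d0; apply/eqP; rewrite eqn_leq height_le /=.
have := @leq_bigmax_cond _ (fun k : 'I_n.+1 => k != i :> nat)
  (fun k : 'I_n.+1 => m - depth (nth 0 v k)) (Ordinal hk) hki.
by rewrite /= d0 subn0.
Qed.

Lemma height_eq v w j : (forall l, l != j -> nth 0 v l = nth 0 w l) ->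
  m <= depth (nth 0 v j) -> m <= depth (nth 0 w j) -> height v = height w.
Proof.
move=> vw hv hw; apply: eq_bigr => k _.
by case: (eqVneq (k : nat) j) => [->|/vw -> //]; lia.
Qed.

Lemma slide_le v : slide v <= p.+1.
Proof. by rewrite /slide; case: eps; have := clamp_le (nth 0 v i); lia. Qed.

Lemma slide_on_face v j eta : j < n.+1 -> (j, eta) != (i, eps) ->
  nth 0 v j = endpoint (p + (m + m)) eta -> slide v = clamp (nth 0 v i).
Proof.
move=> hj ne vj; have := clamp_le (nth 0 v i); rewrite /slide.
case: (eqVneq j i) => [eji|nji].
  move: ne; rewrite eji in vj *; rewrite vj clamp_endpoint xpair_eqE eqxx /= /endpoint.
  by case: eps; case: (eta) => //= _; lia.
rewrite (height_eq_m hj nji) ?vj; first by case: eps; lia.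
by case: (eta); rewrite /depth /endpoint; lia.
Qed.

Lemma nth_retract v k :
  nth 0 (retract v) k = if k == i then slide v else clamp (nth 0 v k).
Proof. by rewrite /retract nth_set_nth /= nth_map0. Qed.

Lemma size_retract v : size v = n.+1 -> size (retract v) = n.+1.
Proof. by move=> hv; rewrite size_set_nth size_map hv; apply/maxn_idPr. Qed.

Lemma retract_vertex v : size v = n.+1 -> is_vertex p.+1 n.+1 (retract v).
Proof.
move=> hv; apply/is_vertexP; split=> [|k]; first exact: size_retract.
by rewrite nth_retract; case: ifP => _; [exact: slide_le | exact: clamp_le].
Qed.

Lemma retract_on_face u j eta : j < n.+1 -> (j, eta) != (i, eps) -> size u = n ->
  retract (ins j (endpoint (p + (m + m)) eta) u) = ins j (endpoint p eta) (map clamp u).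
Proof.
move=> hj ne hu.
have wj : nth 0 (ins j (endpoint (p + (m + m)) eta) u) j = endpoint (p + (m + m)) eta.
  by rewrite nth_ins ?hu // ltnn eqxx.
apply: (@eq_from_nth _ 0) => [|l _].
  by rewrite size_ins size_map hu size_retract // size_ins hu.
rewrite -clamp_endpoint -map_ins nth_map0 // nth_retract.
by case: eqP => [->|_] //; exact: slide_on_face hj ne wj.
Qed.


Lemma retract_on_box v : exists k eta, box_face p (retract v) k eta.
Proof.
case: (boolP [exists k : 'I_n.+1, (k != i :> nat) && (depth (nth 0 v k) < m)]).
  move=> /existsP [[k hk] /andP [/= hki near_k]]; exists k, (m <= nth 0 v k).
  apply/and3P; split=> //; first by rewrite xpair_eqE negb_and hki.
  by rewrite nth_retract (negbTE hki) /endpoint; apply/eqP; case: leqP; move: near_k;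
     rewrite /clamp /depth; lia.
move=> /existsPn far; exists i, (~~ eps).
have h0 : height v = 0.
  apply/eqP; rewrite -leqn0; apply/bigmax_leqP => k hki.
  by move: (far k); rewrite hki /=; lia.
apply/and3P; split=> //; first by rewrite xpair_eqE eqxx; case: eps.
rewrite nth_retract eqxx /slide h0 /endpoint; have := clamp_le (nth 0 v i).
by case: eps => /= ?; apply/eqP; lia.
Qed.

Lemma depth_ge_clamp_neq c x y : zigzag c x y -> clamp x != clamp y ->
  m <= depth x /\ m <= depth y.
Proof. by rewrite /zigzag /clamp /depth; lia. Qed.

Lemma retract_box_arr v w : size v = n.+1 -> size w = n.+1 ->
  box_arr (stage_sign (p + (m + m))) n.+1 v w ->
  box_arr (stage_sign p) n.+1 (retract v) (retract w).
Proof.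
move=> hv hw [->|[j [hj [vw /Iarr_sE vw_j]]]]; first by left.
have vw_zigzag l : zigzag (~~ stage_sign (p + (m + m))) (nth 0 v l) (nth 0 w l).
  by case: (eqVneq l j) => [->|/vw ->] //; left.
right; case: (boolP ((j == i) || (clamp (nth 0 v j) == clamp (nth 0 w j)))) => [/orP ij|].
  exists i; split=> //; split=> [l hli|].
    rewrite !nth_retract (negbTE hli).
    case: (eqVneq l j) => [elj|/vw -> //]; rewrite elj in hli *.
    by case: ij => /eqP // eji; rewrite eji eqxx in hli.
  rewrite !nth_retract eqxx; apply/Iarr_sE; rewrite -stage_sign_clamp.
  exact: zigzag_slide vw_zigzag.
move=> /norP [hji hc]; exists j; split=> //; split=> [l hlj|].
  rewrite !nth_retract (vw l hlj); case: eqP => // eli.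
  have [hdv hdw] := depth_ge_clamp_neq vw_j hc.
  by rewrite /slide (height_eq vw hdv hdw) vw // -eli.
rewrite !nth_retract (negbTE hji); apply/Iarr_sE; rewrite -stage_sign_clamp.
exact: zigzag_clamp.
Qed.

End Retraction.

Definition box_compatible (G : digraph) (x : nat -> bool -> seq nat -> G) (p : nat) : Prop :=
  forall j', j' < n.+1 -> forall j, j < j' -> forall eta eta',
    (j, eta) != (i, eps) -> (j', eta') != (i, eps) ->
    forall u, is_vertex p.+1 n.-1 u ->
      x j' eta' (ins j (endpoint p eta) u) = x j eta (ins j'.-1 (endpoint p eta') u).

Section Gluing.

Variables (G : digraph) (p : nat) (x : nat -> bool -> seq nat -> G).
Hypothesis p_gt0 : 0 < p.
Hypothesis x_cube : forall k eta, k < n.+1 -> (k, eta) != (i, eps) -> is_cube p n (x k eta).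
Hypothesis x_compat : box_compatible x p.

(* The fallback branch is junk, reached only off the open box: [G] may be empty,
   so some cube of the box has to supply the value. *)
Definition glue (w : seq nat) : G :=
  if [pick ke : 'I_n.+1 * bool | box_face p w ke.1 ke.2] is Some (k, eta)
  then x k eta (del k w) else x i (~~ eps) (del i w).

Lemma box_face_agree_lt w k eta k' eta' : is_vertex p.+1 n.+1 w -> k < k' ->
  box_face p w k eta -> box_face p w k' eta' -> x k eta (del k w) = x k' eta' (del k' w).
Proof.
move=> vw hkk' /and3P [_ ne /eqP wk] /and3P [hk' ne' /eqP wk'].
have [hw _] := is_vertexP _ _ _ vw.
have e1 : ins k (endpoint p eta) (del k (del k' w)) = del k' w.
  rewrite -wk (_ : nth 0 w k = nth 0 (del k' w) k) ?ins_del // ?nth_del ?hw ?hkk' //.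
  by rewrite size_del hw //; lia.
have e2 : ins k'.-1 (endpoint p eta') (del k (del k' w)) = del k w.
  rewrite del_delC ?hw // -wk' (_ : nth 0 w k' = nth 0 (del k w) k'.-1) ?ins_del //.
    by rewrite size_del ?hw; lia.
  by rewrite nth_del ?hw; [rewrite ltnNge (_ : k <= k'.-1) ?prednK //; lia | lia].
have n_gt0 : 0 < n by lia.
have vw' := is_vertex_del (hk' : k' <= n) vw; rewrite -(prednK n_gt0) in vw'.
have /is_vertex_del /(_ vw') u_vertex : k <= n.-1 by lia.
have := x_compat hk' hkk' ne ne' u_vertex.
by rewrite e1 e2 => ->.
Qed.

Lemma box_face_agree w k eta k' eta' : is_vertex p.+1 n.+1 w ->
  box_face p w k eta -> box_face p w k' eta' -> x k eta (del k w) = x k' eta' (del k' w).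
Proof.
move=> vw f f'; case: (ltngtP k k') => hkk'.
- exact: box_face_agree_lt.
- by symmetry; apply: box_face_agree_lt.
move: f f' => /and3P [_ _ /eqP wk] /and3P [_ _ /eqP wk']; rewrite -hkk' in wk' *.
by have -> : eta' = eta by apply: (@endpoint_inj p); rewrite -wk -wk'.
Qed.

Lemma glue_face w k eta : is_vertex p.+1 n.+1 w -> box_face p w k eta ->
  glue w = x k eta (del k w).
Proof.
move=> vw f; rewrite /glue; case: pickP => [[k' eta'] /= f'|none].
  exact: box_face_agree.
by have /and3P [hk _ _] := f; move: (none (Ordinal hk, eta)); rewrite /= f.
Qed.

Lemma common_box_face s v w k eta k' eta' :
  box_face p v k eta -> box_face p w k' eta' -> box_arr s n.+1 v w ->
  exists k0 eta0, box_face p v k0 eta0 && box_face p w k0 eta0.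
Proof.
move=> f f' [<-|[j [hj [vw /Iarr_sE vw_j]]]]; first by exists k, eta; rewrite f.
case: (eqVneq k j) => [ekj|nkj].
  case: (eqVneq k' j) => [ek'j|nk'j].
    exists k, eta; rewrite f /=; move: f f' => /and3P [hk ne /eqP vk] /and3P [_ _ /eqP wk'].
    subst k k'; case: vw_j => [vwj|[adj _]]; first by apply/and3P; rewrite -vwj vk.
    by move: adj; rewrite vk wk' /endpoint; case: (eta); case: (eta'); lia.
  exists k', eta'; rewrite f' andbT; move: f' => /and3P [hk' ne' /eqP wk'].
  by apply/and3P; rewrite (vw k' nk'j) wk'.
exists k, eta; rewrite f /=; move: f => /and3P [hk ne /eqP vk].
by apply/and3P; rewrite -(vw k nkj) vk.
Qed.

Lemma glue_arr v w : is_vertex p.+1 n.+1 v -> is_vertex p.+1 n.+1 w ->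
  (exists k eta, box_face p v k eta) -> (exists k eta, box_face p w k eta) ->
  box_arr (stage_sign p) n.+1 v w -> arr (glue v) (glue w).
Proof.
move=> vv vw [k [eta f]] [k' [eta' f']] vw_arr.
have [k0 [eta0 /andP [fv fw]]] := common_box_face f f' vw_arr.
rewrite (glue_face vv fv) (glue_face vw fw).
move: fv fw => /and3P [hk ne /eqP vk] /and3P [_ _ /eqP wk].
apply: (x_cube hk ne); [exact: is_vertex_del.. |].
move: vv vw => /is_vertexP [sv _] /is_vertexP [sw _].
by apply: box_arr_del => //; rewrite vk wk.
Qed.

End Gluing.

Section Filler.

Variables (G : digraph) (b : nat -> bool -> rep G) (p : nat).
Hypothesis odd_p : odd p.
Hypothesis b_stage : forall k, k < n.+1 -> forall eta, rstage (b k eta) <= p.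
Hypothesis b_valid : forall k eta, k < n.+1 -> (k, eta) <> (i, eps) -> valid n (b k eta).
Hypothesis b_compat : box_compatible (fun k eta => transport (b k eta) p) p.

Definition filler : rep G :=
  Rep (p + (p.+1 + p.+1)) (fun v => glue p (fun k eta => transport (b k eta) p) (retract p p.+1 v)).

Lemma transported_cube k eta : k < n.+1 -> (k, eta) != (i, eps) ->
  is_cube p n (transport (b k eta) p).
Proof. by move=> hk /eqP ne; apply: transport_cube; [exact: b_stage | exact: b_valid]. Qed.

Lemma filler_valid : valid n.+1 filler.
Proof.
move=> v w /is_vertexP [sv _] /is_vertexP [sw _] vw /=.
apply: (glue_arr (odd_gt0 odd_p) transported_cube b_compat).
- exact: (retract_vertex odd_p (ltnSn p) sv).
- exact: (retract_vertex odd_p (ltnSn p) sw).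
- exact: (retract_on_box odd_p (ltnSn p) v).
- exact: (retract_on_box odd_p (ltnSn p) w).
- exact: (retract_box_arr odd_p (ltnSn p) sv sw vw).
Qed.

Lemma filler_face k eta : k < n.+1 -> (k, eta) != (i, eps) -> ceq n (face k eta filler) (b k eta).
Proof.
move=> hk ne; have le_kq := leq_trans (b_stage hk eta) (leq_addr (p.+1 + p.+1) p).
exists (p + (p.+1 + p.+1)); do 2!split=> //=.
move=> v /is_vertexP [sv le_v]; rewrite subnn map_id.
have face_v := retract_on_face odd_p (ltnSn p) hk ne sv.
rewrite face_v (@glue_face _ _ _ (odd_gt0 odd_p) b_compat _ k eta).
- rewrite del_ins ?size_map ?sv // -/(transport (b k eta) _ v).
  rewrite (transport_trans _ (b_stage hk eta) (leq_addr _ _)) addKn.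
  by congr transport; apply/esym/eq_in_map => y /(nth_index 0) <-; apply: TT_clamp.
- by rewrite -face_v; apply: (retract_vertex odd_p (ltnSn p)); rewrite size_ins sv.
- by apply/and3P; rewrite nth_ins ?size_map ?sv // ltnn eqxx.
Qed.

End Filler.

End OpenBox.

Theorem mainTheorem3 : forall G : digraph, Ninfty_Kan G.
Proof.
move=> G n i eps b lt_in b_valid b_compat.
have stages : eventually (fun p => forall k, k < n.+1 -> forall eta, rstage (b k eta) <= p).
  apply: eventually_forall_ltn => k _.
  by apply: eventually_forall_bool => eta; apply: eventually_ge.
have compat : eventually (fun p => box_compatible n i eps (fun k eta => transport (b k eta) p) p).
  rewrite /box_compatible; apply: eventually_forall_ltn => j' lt_j'n.
  apply: eventually_forall_ltn => j lt_jj'.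
  apply: eventually_forall_bool => eta; apply: eventually_forall_bool => eta'.
  apply: eventually_imp => /eqP ne; apply: eventually_imp => /eqP ne'.
  exact: eventually_face_compat (b_compat j j' eta eta' lt_jj' lt_j'n ne ne').
have [p odd_p [stages_p compat_p]] := eventually_odd (eventually_and stages compat).
exists (filler n i eps b p); split=> [|k eta lt_kn /eqP ne].
  exact: (filler_valid lt_in odd_p stages_p b_valid compat_p).
exact: (filler_face lt_in odd_p stages_p compat_p lt_kn ne).
Qed.
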